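(* Assume the setting of the context. Let $\delta>0$ and let $\alpha$ be a finite measurable partition of $\Theta\times\mathcal{X}$ with diameter less than $\delta$. Then for every $y\in\mathcal{Y}$ and $n\ge1$, \[ \log\int\exp(g_n(\theta,x,y))\,dP_0\le H(P_n^y,\alpha_n)+L(P_n^y:P_0\mid\alpha_n)+\int g_n(\theta,x,y)\,dP_n^y(\theta,x)+\sum_{k=0}^{n-1}\rho_\delta(T^ky). \]
   Context: Observed system: $\mathcal{Y}$ is a complete separable metric space, $T$ is Borel, and $\nu$ is $T$-invariant and ergodic. Model system: $\mathcal{X}$ is a mixing shift of finite type with left shift $S$ and metric $d_{\mathcal{X}}(x,y)=2^{-\inf\{|m|:x_m\ne y_m\}}$. $\Theta$ is a compact metric space (metric $d_\Theta$), and $\Theta\times\mathcal{X}$ carries the metric $\max(d_\Theta,d_{\mathcal{X}})$. $\{\mu_\theta\}$ are the Gibbs measures of a regular family of Hölder potentials. Loss: $\ell:\Theta\times\mathcal{X}\times\mathcal{Y}\to\mathbb{R}$ is continuous with $\sup_{\theta,x}|\ell|\le\ell^*(y)\in L^1(\nu)$. For each $\delta>0$, $\rho_\delta:\mathcal{Y}\to(0,\infty)$ is measurable with $|\ell(\theta,x,y)-\ell(\theta',x',y)|\le\rho_\delta(y)$ whenever $\max(d_\Theta(\theta,\theta'),d_{\mathcal{X}}(x,x'))\le\delta$ (and $\int\rho_\delta d\nu\to0$ as $\delta\to0^+$). Set $g_n(\theta,x,y)=-\sum_{k<n}\ell(\theta,S^kx,T^ky)$. Prior and posterior: $\pi_0$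 is a fully supported probability on $\Theta$ and $P_0(E)=\int\int\mathbf{1}_E\,d\mu_\theta\,d\pi_0$. The posterior is $P_n^y(E)=\int_E e^{g_n(\theta,x,y)}dP_0\big/\int e^{g_n}dP_0$. Partitions: $R=I_\Theta\times S$ and $\alpha_n=\bigvee_{k=0}^{n-1}R^{-k}\alpha$. Also $H(\eta,\xi)=-\sum_{C\in\xi}\eta(C)\log\eta(C)$, and $L(\eta:\gamma\mid\xi)=\sum_{C\in\xi}\eta(C)\log\gamma(C)$ if $\gamma(C)=0\Rightarrow\eta(C)=0$ for all $C\in\xi$, and $-\infty$ otherwise ($0\log0=0$). *)

From HB Require Import structures.
From mathcomp Require Import all_boot all_order all_algebra.
From mathcomp Require Import all_classical all_reals all_analysis.
Set Implicit Arguments. Unset Strict Implicit. Unset Printing Implicit Defensive.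
Import Order.TTheory GRing.Theory Num.Theory.
Import numFieldNormedType.Exports.
Local Open Scope classical_set_scope.
Local Open Scope ring_scope.

Section MetricNotions.
Context {R : realType} {T : Type}.

Definition is_metric (d : T -> T -> R) : Prop :=
  [/\ (forall x y, 0 <= d x y), (forall x y, d x y = 0 <-> x = y),
      (forall x y, d x y = d y x) & (forall x y z, d x z <= d x y + d y z)].

Definition metric_opens (d : T -> T -> R) : set (set T) :=
  [set U | forall x, U x -> exists2 e : R, 0 < e & [set y | d x y < e] `<=` U].

(* sequential compactness (= compactness for metric spaces) *)
Definition metric_compact (d : T -> T -> R) : Prop :=
  forall u : nat -> T, exists (phi : nat -> nat) (t : T),
    (forall n, (phi n < phi n.+1)%N) /\ (fun n => d (u (phi n)) t) @ \oo --> (0 : R).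

Definition metric_complete (d : T -> T -> R) : Prop :=
  forall u : nat -> T,
    (forall e : R, 0 < e -> exists N, forall m n, (N <= m)%N -> (N <= n)%N -> d (u m) (u n) < e) ->
    exists t, (fun n => d (u n) t) @ \oo --> (0 : R).

Definition metric_separable (d : T -> T -> R) : Prop :=
  exists D : nat -> T, forall t (e : R), 0 < e -> exists n, d t (D n) < e.

Definition diam (d : T -> T -> R) (C : set T) : R :=
  sup ((fun z => d z.1 z.2) @` (C `*` C)).

End MetricNotions.

Definition borel_for {R : realType} {dsp} (T : measurableType dsp) (d : T -> T -> R) : Prop :=
  @measurable _ T = <<s metric_opens d >>.

Definition bisq (a : nat) := int -> 'I_a.+1.
HB.instance Definition _ a := Choice.on (bisq a).
HB.instance Definition _ a := isPointed.Build (bisq a) (fun _ => ord0).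

Definition cylinders (a : nat) : set (set (bisq a)) :=
  [set C | exists (I : seq int) (w : bisq a), C = [set x | forall m, m \in I -> x m = w m]].

(* full shift with the (Borel = cylinder) sigma-algebra *)
Definition seqZ (a : nat) := g_sigma_algebraType (@cylinders a).

Definition shift {a : nat} (x : seqZ a) : seqZ a := fun m => x (m + 1)%R.

Definition sft {a : nat} (A : 'I_a.+1 -> 'I_a.+1 -> bool) : set (seqZ a) :=
  [set x | forall m : int, A (x m) (x (m + 1)%R)].

(* topological mixing of S on X = sft A, using the cylinder base *)
Definition sft_mixing {a : nat} (A : 'I_a.+1 -> 'I_a.+1 -> bool) : Prop :=
  forall x y, sft A x -> sft A y -> forall k : nat, exists N : nat, forall n : nat, (N <= n)%N ->
    exists2 z, sft A z &
      (forall m : int, (`|m| <= k)%N -> z m = x m) /\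
      (forall m : int, (`|m| <= k)%N -> z (m + n%:Z)%R = y m).

(* d_X(x,y) = 2^{-inf{|m| : x_m <> y_m}}  (= 0 if x = y) *)
Definition dX {R : realType} {a : nat} (x y : seqZ a) : R :=
  sup [set (2^-1 : R) ^+ `|m|%N | m in [set m : int | x m != y m]].

Definition birkhoff {R : realType} {a : nat} (phi : seqZ a -> R) (n : nat) (x : seqZ a) : R :=
  \sum_(k < n) phi (iter k shift x).

Definition cyl {a : nat} (x : seqZ a) (n : nat) : set (seqZ a) :=
  [set z | forall k : nat, (k < n)%N -> z k%:Z = x k%:Z].

Definition is_gibbs {R : realType} {a : nat} (A : 'I_a.+1 -> 'I_a.+1 -> bool)
    (phi : seqZ a -> R) (mu : probability (seqZ a) R) : Prop :=
  [/\ mu (sft A) = 1%E,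
      (forall B, measurable B -> mu (shift @^-1` B) = mu B) &
      exists P C : R, 1 <= C /\
        forall x, sft A x -> forall n : nat, (0 < n)%N ->
          C^-1 <= fine (mu (cyl x n)) / expR (- n%:R * P + birkhoff phi n x) <= C].

Definition holder_on {R : realType} {a : nat} (A : 'I_a.+1 -> 'I_a.+1 -> bool)
    (phi : seqZ a -> R) (c beta : R) : Prop :=
  forall x y, sft A x -> sft A y -> `|phi x - phi y| <= c * (dX x y) `^ beta.

Definition regular_family {R : realType} {Th : Type} {a : nat} (dT : Th -> Th -> R)
    (A : 'I_a.+1 -> 'I_a.+1 -> bool) (phi : Th -> seqZ a -> R) : Prop :=
  (exists c beta : R, [/\ 0 < beta, beta <= 1 & forall th, holder_on A (phi th) c beta]) /\
  (forall th (e : R), 0 < e -> exists2 eta : R, 0 < eta &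
     forall th', dT th th' < eta -> forall x, sft A x -> `|phi th x - phi th' x| <= e).

Definition Rmap {Th : Type} {a : nat} (z : Th * seqZ a) : Th * seqZ a := (z.1, shift z.2).

Definition dprod {R : realType} {Th : Type} {a : nat} (dT : Th -> Th -> R)
    (z z' : Th * seqZ a) : R := Num.max (dT z.1 z'.1) (dX z.2 z'.2).

Definition gn {R : realType} {Th Y : Type} {a : nat} (ell : Th -> seqZ a -> Y -> R)
    (Tm : Y -> Y) (n : nat) (z : Th * seqZ a) (y : Y) : R :=
  - \sum_(k < n) ell z.1 (iter k shift z.2) (iter k Tm y).

(* cells of alpha_n = \/_{k<n} R^{-k} alpha, indexed by words w : 'I_n -> 'I_m *)
Definition join_cell {T : Type} {m : nat} (f : T -> T) (alpha : 'I_m -> set T) (n : nat)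
    (w : {ffun 'I_n -> 'I_m}) : set T :=
  [set z | forall k : 'I_n, alpha (w k) (iter k f z)].

(* H(eta, xi) = - sum_C eta(C) log eta(C)   (ln 0 = 0 in mathcomp, so 0 log 0 = 0) *)
Definition entropy {R : realType} {T : Type} {I : finType} (eta : set T -> \bar R)
    (xi : I -> set T) : R :=
  - \sum_(i : I) fine (eta (xi i)) * ln (fine (eta (xi i))).

Definition Lterm {R : realType} {T : Type} {I : finType} (eta gamma : set T -> \bar R)
    (xi : I -> set T) : \bar R :=
  if `[< forall i, gamma (xi i) = 0%E -> eta (xi i) = 0%E >]
  then (\sum_(i : I) fine (eta (xi i)) * ln (fine (gamma (xi i))))%:E
  else -oo%E.
Arguments join_cell {T m} f alpha n w.

(* If z and z' lie in the same cell of alpha_n then, for every k < n, R^k z and R^k z'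
   lie in a common cell of alpha, of diameter < delta; so g_n(., y) oscillates on each
   cell by at most S = sum_k rho_delta(T^k y).  With M_C = sup_C g_n and Z the
   normalising constant, P_n^y(C) Z <= P_0(C) exp M_C; taking logarithms and averaging
   with the weights P_n^y(C) gives log Z <= H + L + sum_C P_n^y(C) M_C, and
   sum_C P_n^y(C) M_C <= int g_n dP_n^y + S. *)

From Pilot Require Import Defs.
From HB Require Import structures.
From mathcomp Require Import all_boot all_order all_algebra.
From mathcomp Require Import all_classical all_reals all_analysis.
From mathcomp Require Import measurable_realfun lra.
Set Implicit Arguments. Unset Strict Implicit. Unset Printing Implicit Defensive.
Import Order.TTheory GRing.Theory Num.Theory.
Import numFieldNormedType.Exports.
Local Open Scope classical_set_scope.
Local Open Scope ring_scope.

(* The integrands of interest (e.g. g_n) are not known to be measurable; these lemmas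
   only use that the integral of a nonnegative function is the supremum of the
   integrals of the (measurable) simple functions below it. *)
Section integral_without_measurability.
Context d (T : measurableType d) (R : realType).
Variable mu : {measure set T -> \bar R}.
Local Open Scope ereal_scope.
Import HBNNSimple.

Lemma ge0_le_integralT (f1 f2 : T -> \bar R) : (forall x, 0 <= f1 x) ->
  (forall x, f1 x <= f2 x) -> \int[mu]_x f1 x <= \int[mu]_x f2 x.
Proof.
move=> f10 f12; have f20 x : 0 <= f2 x by apply: le_trans (f12 x).
rewrite !ge0_integralTE//; apply: ereal_sup_le => _ [h hf <-]; exists h => //= x.
exact: le_trans (hf x) (f12 x).
Qed.

Lemma ge0_integral_le_conull (G : set T) (f : T -> \bar R) :
  measurable G -> mu (~` G) = 0 -> (forall x, 0 <= f x) ->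
  \int[mu]_x f x <= \int[mu]_x (f \_ G) x.
Proof.
move=> mG G0 f0; rewrite [X in X <= _]ge0_integralTE//.
apply: ge_ereal_sup => _ [h hf <-]; rewrite -integralT_nnsfun.
have mh : measurable_fun [set: T] (fun x => ((h x : R)%:E : \bar R)).
  by apply/measurable_EFinP; exact: measurable_funPT.
rewrite -[X in integral _ X _ <= _](setUv G) integral_setU//; last 3 first.
- exact: measurableC.
- by rewrite setUv.
- exact/disj_set2P/setICr.
rewrite (null_set_integral (measurableC mG)) ?adde0//; last exact: measurable_funS mh.
rewrite integral_mkcond; apply: ge0_le_integralT => x; rewrite /patch.
  by case: ifP => // _; rewrite lee_fin.
by case: ifP => // _; exact: hf.
Qed.

Lemma ge0_integral_null (N : set T) (f : T -> \bar R) :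
  measurable N -> mu N = 0 -> (forall x, 0 <= f x) -> \int[mu]_(x in N) f x = 0.
Proof.
move=> mN N0 f0; apply/eqP; rewrite eq_le integral_ge0 ?andbT// integral_mkcond.
have fN0 x : 0 <= (f \_ N) x by rewrite /patch; case: ifP.
apply: le_trans (ge0_integral_le_conull (measurableC mN) _ fN0) _; first by rewrite setCK.
rewrite integral0_eq// => x _.
by rewrite /patch; case: ifPn => // /set_mem; case: ifPn => // /set_mem.
Qed.

Lemma le_integral_conull (G : set T) (f1 f2 : T -> \bar R) :
  measurable G -> mu (~` G) = 0 -> (forall x, G x -> f1 x <= f2 x) ->
  \int[mu]_x f1 x <= \int[mu]_x f2 x.
Proof.
move=> mG G0 f12; have f12_in : {in G, forall x, f1 x <= f2 x} by move=> x /set_mem/f12.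
rewrite [leLHS]integralE [leRHS]integralE; apply: leeB.
  apply: le_trans (ge0_integral_le_conull mG G0 (funepos_ge0 _)) _.
  apply: ge0_le_integralT => x; rewrite /patch; case: ifPn => // xG.
  - exact: funepos_le f12_in x xG.
  - exact: funepos_ge0.
apply: le_trans (ge0_integral_le_conull mG G0 (funeneg_ge0 _)) _.
apply: ge0_le_integralT => x; rewrite /patch; case: ifPn => // xG.
- exact: funeneg_le f12_in x xG.
- exact: funeneg_ge0.
Qed.

End integral_without_measurability.

Section step_function.
Context (T : Type) (R : realType) (I : finType) (C : I -> set T) (c : I -> R).
Local Open Scope ereal_scope.

Definition step_fun z := \sum_i (c i)%:E * (\1_(C i) z)%:E.

Lemma step_fun_out z : (forall i, ~ C i z) -> step_fun z = 0.
Proof. by move=> Cz; rewrite /step_fun big1// => i _; rewrite indicE memNset ?mule0. Qed.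

Lemma step_fun_in z i : C i z -> (forall j, C j z -> j = i) -> step_fun z = (c i)%:E.
Proof.
move=> Ciz Cz; rewrite /step_fun (bigD1 i)//= indicE mem_set// mule1 big1 ?adde0//.
by move=> j ji; rewrite indicE memNset ?mule0// => /Cz eji; rewrite eji eqxx in ji.
Qed.

End step_function.

Section step_function_integral.
Context d (T : measurableType d) (R : realType).
Variable mu : {measure set T -> \bar R}.
Hypothesis mu_fin : (mu setT < +oo)%E.
Local Open Scope ereal_scope.

Lemma integrable_indic_fin (A : set T) : measurable A ->
  mu.-integrable setT (fun x => (\1_A x)%:E).
Proof.
move=> mA; apply/integrableP; split; first exact/measurable_EFinP.
under eq_integral do rewrite gee0_abs ?lee_fin//.
by rewrite integral_indic// setIT (le_lt_trans _ mu_fin) ?le_measure ?inE.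
Qed.

Lemma integral_step_fun (I : finType) (C : I -> set T) (c : I -> R) :
  (forall i, measurable (C i)) ->
  \int[mu]_x step_fun C c x = \sum_i (c i)%:E * mu (C i).
Proof.
move=> mC; rewrite integral_sum//; last first.
  by move=> i; apply: integrableZl => //; exact: integrable_indic_fin.
apply: eq_bigr => i _; rewrite integralZl//; last exact: integrable_indic_fin.
by rewrite integral_indic// setIT.
Qed.

End step_function_integral.

Lemma weighted_ln_le (R : realType) (p q Z M : R) : 0 <= p -> 0 < Z ->
  p * Z <= q * expR M -> p * ln Z <= - (p * ln p) + p * ln q + p * M.
Proof.
rewrite le_eqVlt => /orP[/eqP <-|p_gt0 Z_gt0 pZ_le]; first by rewrite !mul0r oppr0 !addr0.
have q_gt0 : 0 < q.
  by rewrite -(pmulr_lgt0 _ (expR_gt0 M)) (lt_le_trans _ pZ_le) ?mulr_gt0.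
have := pZ_le; rewrite -ler_ln ?posrE ?mulr_gt0 ?expR_gt0// !lnM ?posrE ?expR_gt0// expRK.
nra.
Qed.

Section posterior_on_partition.
Context d (T : measurableType d) (R : realType).
Variables (P0 : probability T R) (g : T -> R) (Pn : {measure set T -> \bar R}).
Local Notation Z := (\int[P0]_z expR (g z)).
Hypothesis PnE : forall E, measurable E ->
  Pn E = ((\int[P0]_(z in E) expR (g z)) / Z)%:E.
Variables (I : finType) (C : I -> set T) (G : set T) (S : R).
Hypotheses (mC : forall i, measurable (C i)) (mG : measurable G).
Hypothesis P0_conull : P0 (~` G) = 0%E.
Hypothesis C_sub : forall i, C i `<=` G.
Hypothesis C_cover : forall z, G z -> exists i, C i z.
Hypothesis C_disj : forall i j z, C i z -> C j z -> i = j.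
Hypothesis g_osc : forall i z z', C i z -> C i z' -> g z' <= g z + S.

Lemma posterior_null E : measurable E -> P0 E = 0%E -> Pn E = 0%E.
Proof.
by move=> mE P0E; rewrite PnE// /Rintegral ge0_integral_null ?mul0r.
Qed.

Lemma posterior_conull : Pn (~` G) = 0%E.
Proof. exact: posterior_null (measurableC mG) P0_conull. Qed.

(* [Z] is real valued, so [Z = 0] also covers an infinite integral; [ln 0 = 0]. *)
Lemma posterior_bound_degenerate : 0 <= S -> Z = 0 ->
  ((ln Z)%:E <= (entropy Pn C)%:E + Lterm Pn P0 C + \int[Pn]_z (g z)%:E + S%:E)%E.
Proof.
move=> S_ge0 Z0.
have Pn0 E : measurable E -> Pn E = 0%E by move=> mE; rewrite PnE// Z0 invr0 mulr0.
have int0 f : (forall x, 0 <= f x)%E -> (\int[Pn]_x f x = 0)%E.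
  by move=> f0; rewrite -(ge0_integral_null measurableT (Pn0 _ measurableT) f0).
have cells0 : entropy Pn C = 0 /\ Lterm Pn P0 C = 0%E.
  rewrite /entropy /Lterm asboolT => [|i _]; last exact: Pn0.
  by split; rewrite big1 ?oppr0// => i _; rewrite Pn0//= mul0r.
rewrite integralE (int0 _ (funepos_ge0 _)) (int0 _ (funeneg_ge0 _)) sube0.
by rewrite cells0.1 cells0.2 Z0 ln0// !adde0 add0e lee_fin.
Qed.

Definition cell_sup i := sup [set g z | z in C i].

Lemma cell_sup_bounds i z : C i z -> g z <= cell_sup i /\ cell_sup i - S <= g z.
Proof.
move=> Ciz; have ub : ubound [set g z | z in C i] (g z + S).
  by move=> _ [z' Ciz' <-]; exact: g_osc Ciz Ciz'.
have ne : [set g z | z in C i] !=set0 by exists (g z), z.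
split; first by apply: sup_upper_bound; [split; [|exists (g z + S)] | exists z].
have : cell_sup i <= g z + S by exact: ge_sup.
lra.
Qed.

Lemma step_fun_cell (c : I -> R) i z : C i z -> step_fun C c z = (c i)%:E.
Proof. by move=> Ciz; apply: (step_fun_in _ Ciz) => j Cjz; exact: C_disj Cjz Ciz. Qed.

Section nondegenerate.
Hypothesis Z_gt0 : 0 < Z.

Lemma expR_integral_fin_num E : measurable E ->
  (\int[P0]_(z in E) (expR (g z))%:E)%E \is a fin_num.
Proof.
move=> mE; have expR0 x : (0 <= (expR (g x))%:E)%E by rewrite lee_fin expR_ge0.
have ZT_lt : (\int[P0]_z (expR (g z))%:E < +oo)%E.
  by move: Z_gt0; rewrite /Rintegral; case: integral => //= [r|]; rewrite ?ltry ?ltxx.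
rewrite ge0_fin_numE ?integral_ge0//; apply: le_lt_trans ZT_lt.
by rewrite integral_mkcond; apply: ge0_le_integralT => x; rewrite /patch; case: ifP.
Qed.

Lemma posterior_setT : Pn setT = 1%E.
Proof. by rewrite PnE// divff// gt_eqF. Qed.

Lemma posterior_fin : (Pn setT < +oo)%E.
Proof. by rewrite posterior_setT ltry. Qed.

Local Notation p i := (fine (Pn (C i))).
Local Notation q i := (fine (P0 (C i))).

Lemma posterior_cellE i : Pn (C i) = (p i)%:E.
Proof. by rewrite PnE. Qed.

Lemma sum_posterior_cells : \sum_i p i = 1.
Proof.
have indicG z : step_fun C (fun=> 1 : R) z = (\1_G z)%:E.
  have [Gz|nGz] := pselect (G z).
    by have [i Ciz] := C_cover Gz; rewrite (step_fun_cell _ Ciz) indicE mem_set.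
  by rewrite step_fun_out ?indicE ?memNset// => i /C_sub.
have := integral_step_fun posterior_fin (fun=> 1) mC.
under eq_integral do rewrite indicG.
rewrite integral_indic// setIT.
have -> : Pn G = 1%E.
  have PnU : Pn (G `|` ~` G) = (Pn G + Pn (~` G))%E.
    exact: measureU (measurableC mG) (setICr G).
  by rewrite -posterior_setT -(setUv G) PnU posterior_conull adde0.
under eq_bigr do rewrite posterior_cellE mul1e.
by rewrite sumEFin => -[->].
Qed.

Lemma posterior_cell_le i : p i * Z <= q i * expR (cell_sup i).
Proof.
have le_int : (\int[P0]_(z in C i) (expR (g z))%:E <= (expR (cell_sup i))%:E * P0 (C i))%E.
  rewrite -integral_cst// !(integral_mkcond (C i)); apply: ge0_le_integralT => x; rewrite /patch.
    by case: ifP => // _; rewrite lee_fin expR_ge0.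
  case: ifPn => // /set_mem Cix.
  by rewrite lee_fin ler_expR; exact: (cell_sup_bounds Cix).1.
rewrite PnE// /Rintegral divfK ?gt_eqF// mulrC -lee_fin EFinM fineK.
  by rewrite fineK ?fin_num_measure.
exact: expR_integral_fin_num.
Qed.

Lemma posterior_abs_cont i : P0 (C i) = 0%E -> Pn (C i) = 0%E.
Proof.
move=> P0C; have := posterior_cell_le i; rewrite P0C mul0r pmulr_lle0// => p_le0.
by rewrite posterior_cellE; congr EFin; apply/eqP; rewrite eq_le p_le0 fine_ge0.
Qed.

Lemma posterior_integral_ge :
  (((\sum_i p i * cell_sup i) - S)%:E <= \int[Pn]_z (g z)%:E)%E.
Proof.
have -> : (\sum_i p i * cell_sup i) - S = \sum_i p i * (cell_sup i - S).
  rewrite -[S in LHS]mul1r -sum_posterior_cells mulr_suml -sumrB.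
  by apply: eq_bigr => i _; rewrite mulrBr.
rewrite -sumEFin.
under eq_bigr do rewrite EFinM muleC -posterior_cellE.
rewrite -integral_step_fun//; last exact: posterior_fin.
apply: le_integral_conull mG posterior_conull _ => z Gz.
have [i Ciz] := C_cover Gz.
by rewrite (step_fun_cell _ Ciz) lee_fin; exact: (cell_sup_bounds Ciz).2.
Qed.

Lemma posterior_bound_nondegenerate :
  ((ln Z)%:E <= (entropy Pn C)%:E + Lterm Pn P0 C + \int[Pn]_z (g z)%:E + S%:E)%E.
Proof.
rewrite /entropy /Lterm asboolT; last exact: posterior_abs_cont.
apply: le_trans (leeD2r _ (leeD2l _ posterior_integral_ge)).
rewrite -!EFinD lee_fin -[ln Z]mul1r -sum_posterior_cells mulr_suml.
have : \sum_i p i * ln Z <=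
    \sum_i (- (p i * ln (p i)) + p i * ln (q i) + p i * cell_sup i).
  by apply: ler_sum => i _; apply: weighted_ln_le Z_gt0 (posterior_cell_le i); rewrite fine_ge0.
rewrite !big_split /= sumrN; lra.
Qed.

End nondegenerate.

Theorem posterior_partition_bound : 0 <= S ->
  ((ln Z)%:E <= (entropy Pn C)%:E + Lterm Pn P0 C + \int[Pn]_z (g z)%:E + S%:E)%E.
Proof.
move=> S_ge0; have : 0 <= Z by apply: Rintegral_ge0 => z _; exact: expR_ge0.
rewrite le_eqVlt => /orP[/eqP Z0|Z_gt0].
  exact: posterior_bound_degenerate S_ge0 (esym Z0).
exact: posterior_bound_nondegenerate.
Qed.

End posterior_on_partition.

Section metric_facts.
Context (R : realType) (T : Type) (dist : T -> T -> R).

Lemma metric_compact_bounded : is_metric dist -> metric_compact dist ->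
  exists B, forall x y, dist x y <= B.
Proof.
move=> [d0 _ dC dtri] dcpt.
have [[t0 _]|T0] := pselect (exists t : T, True); last first.
  by exists 0 => x; exfalso; apply: T0; exists x.
suff [B hB] : exists B, forall x, dist x t0 <= B.
  by exists (B + B) => x y; rewrite (le_trans (dtri x t0 y))// (dC t0 y) lerD.
apply: contrapT => unbounded.
have far k : exists x, (k%:R : R) < dist x t0.
  apply: contrapT => /forallNP near; apply: unbounded; exists k%:R => x.
  by rewrite leNgt; apply/negP/near.
have [u hu] := choice far.
have [phi [t [phi_incr cvg_t]]] := dcpt u.
have phi_ge k : (k <= phi k)%N.
  by elim: k => // k ih; exact: leq_ltn_trans ih (phi_incr k).
have /cvgrPdist_lt /(_ 1 ltr01) [N _ closeN] := cvg_t.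
pose k := maxn N (Num.bound (1 + dist t t0)).
have := closeN k (leq_maxl _ _); rewrite /= sub0r normrN ger0_norm ?d0// => close_k.
have := hu (phi k); have := dtri (u (phi k)) t t0.
have : 1 + dist t t0 < (Num.bound (1 + dist t t0))%:R.
  by apply: archi_boundP; rewrite addr_ge0 ?d0.
have : ((Num.bound (1 + dist t t0))%:R : R) <= (phi k)%:R.
  by rewrite ler_nat (leq_trans (leq_maxr _ _) (phi_ge k)).
lra.
Qed.

Lemma le_diam (C : set T) B x y : (forall x y, dist x y <= B) ->
  C x -> C y -> dist x y <= diam dist C.
Proof.
move=> distB Cx Cy; apply: sup_upper_bound; last by exists (x, y).
split; first by exists (dist x y), (x, y).
by exists B => _ [[u v] _ <-]; exact: distB.
Qed.

End metric_facts.

Section shift_space.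
Context (a : nat).
Implicit Type A : 'I_a.+1 -> 'I_a.+1 -> bool.

Lemma coord_measurable (m : int) (i : 'I_a.+1) : measurable [set x : seqZ a | x m = i].
Proof.
apply: sub_sigma_algebra; exists [:: m], (fun=> i).
by apply/seteqP; split => x /=; [move=> xi j; rewrite inE => /eqP -> | apply; rewrite inE].
Qed.

Lemma shift_measurable : measurable_fun setT (@Defs.shift a).
Proof.
apply: measurability; first reflexivity.
move=> _ [_ [I [w ->]] <-]; rewrite setTI; apply: sub_sigma_algebra.
exists (map (fun m => m + 1) I), (fun j => w (j - 1)).
apply/seteqP; split => x /=.
  by move=> xw _ /mapP[m mI ->]; rewrite addrK; exact: xw.
by move=> xw m mI; rewrite /Defs.shift xw ?addrK//; exact: map_f.
Qed.

Lemma sft_measurable A : measurable (sft A).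
Proof.
pose step (m : int) := [set x : seqZ a | A (x m) (x (m + 1))].
have step_measurable m : measurable (step m).
  have -> : step m = \bigcup_(ij in [set ij | A ij.1 ij.2])
      ([set x : seqZ a | x m = ij.1] `&` [set x | x (m + 1) = ij.2]).
    apply/seteqP; split => x /=; first by move=> Ax; exists (x m, x (m + 1)).
    by move=> [[i j] /= Aij [xi xj]]; rewrite /step /= xi xj.
  apply: fin_bigcup_measurable => [|ij _]; first exact: finite_finset.
  by apply: measurableI; exact: coord_measurable.
have -> : sft A = \bigcap_k (step (Posz k) `&` step (Negz k)).
  apply/seteqP; split => x /=; first by move=> xA k _; split; exact: xA.
  by move=> xA [k|k]; have [] := xA k I.
by apply: bigcapT_measurable => k; exact: measurableI.
Qed.

Lemma sft_iter_shift A (x : seqZ a) k : sft A x -> sft A (iter k Defs.shift x).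
Proof. by move=> xA; elim: k => //= k ih m; exact: ih. Qed.

Lemma dX_le1 (R : realType) (x y : seqZ a) : @dX R a x y <= 1.
Proof.
rewrite /dX; set E := [set _ | _ in _].
have [->|/set0P ne] := eqVneq E set0; first by rewrite sup0.
apply: ge_sup => // _ [k _ <-]; apply: exprn_ile1; first by rewrite invr_ge0.
by rewrite invf_le1 ?ler1n.
Qed.

End shift_space.

Section join_cells.
Context (T : Type) (f : T -> T) (m : nat) (alpha : 'I_m -> set T).

Lemma join_cell_disj : (forall i j, i != j -> alpha i `&` alpha j = set0) ->
  forall n w w' z, join_cell f alpha n w z -> join_cell f alpha n w' z -> w = w'.
Proof.
move=> alpha_disj n w w' z wz w'z; apply/ffunP => k; apply/eqP; apply: contraT => ww'.
suff : (alpha (w k) `&` alpha (w' k)) (iter k f z) by rewrite alpha_disj.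
by split.
Qed.

Lemma join_cell_sub (G : set T) n w : (0 < n)%N -> (forall i, alpha i `<=` G) ->
  join_cell f alpha n w `<=` G.
Proof. by move=> n_gt0 alphaG z /(_ (Ordinal n_gt0)); exact: alphaG. Qed.

Lemma join_cell_cover (G : set T) n z : (forall z, G z -> G (f z)) ->
  (forall z, G z -> exists i, alpha i z) -> G z -> exists w, join_cell f alpha n w z.
Proof.
move=> fG alpha_cover Gz.
have iterG k : G (iter k f z) by elim: k => //= k ih; exact: fG.
have [w wP] := @fin_all_exists 'I_n (fun=> 'I_m) (fun k i => alpha i (iter k f z))
  (fun k => alpha_cover _ (iterG k)).
by exists [ffun k => w k] => k; rewrite ffunE.
Qed.

End join_cells.

Lemma join_cell_measurable d (T : measurableType d) (f : T -> T) (m : nat)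
    (alpha : 'I_m -> set T) n w :
  measurable_fun setT f -> (forall i, measurable (alpha i)) ->
  measurable (join_cell f alpha n w).
Proof.
move=> mf malpha.
have miter k : measurable_fun setT (iter k f).
  by elim: k => [|k ih]; [exact: measurable_id | exact: measurableT_comp mf ih].
have -> : join_cell f alpha n w = \bigcap_(k in [set: 'I_n]) (iter k f @^-1` alpha (w k)).
  by apply/seteqP; split => z /= wz k => [_|]; exact: wz.
apply: fin_bigcap_measurable => [|k _]; first exact: finite_finset.
by rewrite -[X in measurable X]setTI; exact: miter.
Qed.

Lemma iter_Rmap (Th : Type) (a : nat) k (z : Th * seqZ a) :
  iter k Rmap z = (z.1, iter k Defs.shift z.2).
Proof. by elim: k => [|k /= ->]; [case: z|]. Qed.

Lemma Rmap_measurable dth (Th : measurableType dth) (a : nat) :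
  measurable_fun setT (@Rmap Th a).
Proof.
apply: measurable_fun_pair; first exact: measurable_fst.
exact: measurableT_comp (@shift_measurable a) measurable_snd.
Qed.

Lemma prior_conull (R : realType) d1 d2 (Th : measurableType d1) (X : measurableType d2)
    (pi0 : probability Th R) (mu : Th -> probability X R)
    (P0 : {measure set (Th * X)%type -> \bar R}) (B : set X) :
  measurable B -> (forall th, mu th B = 1%E) ->
  (forall E, measurable E -> P0 E = (\int[pi0]_th mu th (xsection E th))%E) ->
  P0 (~` (setT `*` B)) = 0%E.
Proof.
move=> mB muB P0E; rewrite P0E; last exact: measurableC (measurableX measurableT mB).
apply: integral0_eq => th _.
have -> : xsection (~` (setT `*` B)) th = ~` B.
  by apply/seteqP; split => x; rewrite /xsection /= in_setE /=; tauto.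
by rewrite (probability_setC (mu th) mB) muB subee.
Qed.

Lemma gn_join_cell_osc (R : realType) (Th Y : Type) (a : nat)
    (A : 'I_a.+1 -> 'I_a.+1 -> bool) (dT : Th -> Th -> R) (ell : Th -> seqZ a -> Y -> R)
    (Tm : Y -> Y) (r : Y -> R) (delta : R) (m : nat)
    (alpha : 'I_m -> set (Th * seqZ a)%type) (n : nat) (y : Y) :
  (forall th th' x x' y, sft A x -> sft A x' ->
     Num.max (dT th th') (dX x x') <= delta -> `|ell th x y - ell th' x' y| <= r y) ->
  (forall i, alpha i `<=` setT `*` sft A) ->
  (forall i z z', alpha i z -> alpha i z' -> dprod dT z z' <= delta) ->
  forall w z z', join_cell Rmap alpha n w z -> join_cell Rmap alpha n w z' ->
  gn ell Tm n z' y <= gn ell Tm n z y + \sum_(k < n) r (iter k Tm y).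
Proof.
move=> ell_r alpha_sub alpha_small w z z' wz wz'.
have step (k : 'I_n) : `|ell z.1 (iter k Defs.shift z.2) (iter k Tm y) -
    ell z'.1 (iter k Defs.shift z'.2) (iter k Tm y)| <= r (iter k Tm y).
  have := alpha_small _ _ _ (wz k) (wz' k); rewrite /dprod !iter_Rmap /= => close.
  have := alpha_sub _ _ (wz k); have := alpha_sub _ _ (wz' k).
  by rewrite !iter_Rmap => -[_ z'A] [_ zA]; exact: ell_r.
have : \sum_(k < n) (ell z.1 (iter k Defs.shift z.2) (iter k Tm y) -
    ell z'.1 (iter k Defs.shift z'.2) (iter k Tm y)) <= \sum_(k < n) r (iter k Tm y).
  by apply: ler_sum => k _; exact: le_trans (ler_norm _) (step k).
rewrite sumrB /gn; lra.
Qed.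

Theorem lemma7p4
  (R : realType)
  (* observed system: (Y, dY) complete separable metric, Borel sets, T Borel, nu invariant ergodic *)
  (dy : measure_display) (Y : measurableType dy) (dY : Y -> Y -> R)
  (HdY : is_metric dY) (HYc : metric_complete dY) (HYs : metric_separable dY)
  (HYb : borel_for dY)
  (Tm : Y -> Y) (HTm : measurable_fun setT Tm)
  (nu : probability Y R)
  (Hinv : forall B, measurable B -> nu (Tm @^-1` B) = nu B)
  (Herg : forall B, measurable B -> Tm @^-1` B = B -> nu B = 0%E \/ nu B = 1%E)
  (* model system: mixing SFT X = sft A, compact metric parameter space Theta *)
  (a : nat) (A : 'I_a.+1 -> 'I_a.+1 -> bool) (HA : sft_mixing A)
  (dth : measure_display) (Th : measurableType dth) (dT : Th -> Th -> R)
  (HdT : is_metric dT) (HTc : metric_compact dT) (HTb : borel_for dT)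
  (* Gibbs measures of a regular family of Hoelder potentials *)
  (phi : Th -> seqZ a -> R) (Hphi : regular_family dT A phi)
  (mu : Th -> probability (seqZ a) R) (Hmu : forall th, is_gibbs A (phi th) (mu th))
  (* loss *)
  (ell : Th -> seqZ a -> Y -> R)
  (Hcont : forall th x y, sft A x -> forall e : R, 0 < e -> exists2 eta : R, 0 < eta &
     forall th' x' y', sft A x' -> dT th th' < eta -> dX x x' < eta -> dY y y' < eta ->
       `|ell th x y - ell th' x' y'| < e)
  (lstar : Y -> R) (Hlstar_m : measurable_fun setT lstar)
  (Hlstar_i : nu.-integrable setT (EFin \o lstar))
  (Hbound : forall th x y, sft A x -> `|ell th x y| <= lstar y)
  (rho : R -> Y -> R)
  (Hrho_m : forall d, 0 < d -> measurable_fun setT (rho d))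
  (Hrho_pos : forall d, 0 < d -> forall y, 0 < rho d y)
  (Hrho : forall d, 0 < d -> forall th th' x x' y, sft A x -> sft A x' ->
      Num.max (dT th th') (dX x x') <= d -> `|ell th x y - ell th' x' y| <= rho d y)
  (Hrho_lim : (fun d => (\int[nu]_y (rho d y)%:E)%E) @ 0^'+ --> 0%E)
  (* prior *)
  (pi0 : probability Th R)
  (Hpi0 : forall U, metric_opens dT U -> U !=set0 -> (0 < pi0 U)%E)
  (P0 : probability (Th * seqZ a)%type R)
  (HP0 : forall E, measurable E -> P0 E = (\int[pi0]_th mu th (xsection E th))%E)
  (* delta and the partition alpha of Theta x X *)
  (delta : R) (Hdelta : 0 < delta)
  (m : nat) (alpha : 'I_m -> set (Th * seqZ a)%type)
  (Halpha_m : forall i, measurable (alpha i))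
  (Halpha_disj : forall i j, i != j -> alpha i `&` alpha j = set0)
  (Halpha_sub : forall i, alpha i `<=` setT `*` sft A)
  (Halpha_cov : forall z, (setT `*` sft A) z -> exists i, alpha i z)
  (Halpha_diam : \big[Num.max/0]_(i < m) diam (dprod dT) (alpha i) < delta) :
  forall (y : Y) (n : nat) (Pn : {measure set (Th * seqZ a)%type -> \bar R}),
    (0 < n)%N ->
    (* Pn is the posterior P_n^y *)
    (forall E, measurable E ->
       Pn E = ((\int[P0]_(z in E) expR (gn ell Tm n z y)) /
               (\int[P0]_z expR (gn ell Tm n z y)))%:E) ->
    ((ln (\int[P0]_z expR (gn ell Tm n z y)))%:E
      <= (entropy Pn (join_cell Rmap alpha n))%:E
         + Lterm Pn P0 (join_cell Rmap alpha n)
         + (\int[Pn]_z (gn ell Tm n z y)%:E)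
         + (\sum_(k < n) rho delta (iter k Tm y))%:E)%E.
Proof.
move=> y n Pn n_gt0 PnE.
have [BT dT_le] := metric_compact_bounded HdT HTc.
have dprod_le (z z' : (Th * seqZ a)%type) : dprod dT z z' <= Num.max BT 1.
  by apply: le_max2; [exact: dT_le | exact: dX_le1].
have alpha_small i z z' : alpha i z -> alpha i z' -> dprod dT z z' <= delta.
  move=> zi z'i; apply/ltW; apply: le_lt_trans (le_diam dprod_le zi z'i) _.
  by apply: le_lt_trans Halpha_diam; exact: le_bigmax.
have sftG (z : (Th * seqZ a)%type) : (setT `*` sft A) z -> (setT `*` sft A) (Rmap z).
  by move=> [_ zA]; split => //; apply: (sft_iter_shift 1).
apply: (posterior_partition_bound (g := fun z => gn ell Tm n z y)
  (C := join_cell Rmap alpha n) (G := setT `*` sft A)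
  (S := \sum_(k < n) rho delta (iter k Tm y)) PnE).
- by move=> w; apply: join_cell_measurable (@Rmap_measurable _ _ _) Halpha_m.
- exact: measurableX measurableT (sft_measurable A).
- by apply: prior_conull HP0 => [|th]; [exact: sft_measurable | case: (Hmu th)].
- by move=> w; apply: join_cell_sub n_gt0 Halpha_sub.
- by move=> z; apply: join_cell_cover sftG Halpha_cov.
- exact: join_cell_disj Halpha_disj n.
- exact: gn_join_cell_osc (Hrho _ Hdelta) Halpha_sub alpha_small.
- by apply: sumr_ge0 => k _; exact/ltW/Hrho_pos.
Qed.
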